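(* Let $t\in[0,T]$. (a) For every $X\in\mathbb{L}^\infty(\mathbb{R}_-,\mathcal{F}_T)$ there exists a unique $Z_t\in\mathbb{L}^\infty(\mathbb{R}_-,\mathcal{F}_t)$ such that $\operatorname{ess\,inf}_{\mathcal{F}_0}(Z_t1_{F_t})=\operatorname{ess\,inf}_{\mathcal{F}_0}(X1_{F_t})$ for all $F_t\in\mathcal{F}_t$. (b) For every $X\in\mathbb{L}^\infty(\mathbb{R},\mathcal{F}_T)$ with $X<0$ a.s. there exists a unique $Z_t\in\mathbb{L}^0(\mathbb{R}_-,\mathcal{F}_t)$ bounded from below such that $\operatorname{ess\,inf}_{\mathcal{F}_0}(Z_t1_{F_t})=\operatorname{ess\,inf}_{\mathcal{F}_0}(X1_{F_t})$ for all $F_t\in\mathcal{F}_t$.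
   Context: Let $(\Omega,\mathcal{F},\mathbb{P})$ be a complete probability space and $(\mathcal{F}_t)_{t\in[0,T]}$ a filtration of complete sub-$\sigma$-algebras of $\mathcal{F}$ ($\mathcal{F}_s\subseteq\mathcal{F}_t$ for $s\le t$). $\mathbb{L}^0(G,\mathcal{G})$ denotes the $\mathcal{G}$-measurable random variables a.s. valued in $G$ and $\mathbb{L}^\infty(G,\mathcal{G})$ the essentially bounded ones; $\mathbb{R}_-=(-\infty,0]$. For a sub-$\sigma$-algebra $\mathcal{G}$, $\operatorname{ess\,sup}_{\mathcal{G}}(Y)$ is the smallest (a.s.) $\mathcal{G}$-measurable $\overline{\mathbb{R}}$-valued random variable dominating $Y$ a.s., and $\operatorname{ess\,inf}_{\mathcal{G}}(Y)=-\operatorname{ess\,sup}_{\mathcal{G}}(-Y)$ is the largest $\mathcal{G}$-measurable random variable dominated by $Y$ a.s. *)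

From HB Require Import structures.
From mathcomp Require Import all_boot all_order all_algebra.
From mathcomp Require Import all_classical all_reals all_analysis measurable_realfun.
From Stdlib Require Import ClassicalEpsilon.
Set Implicit Arguments. Unset Strict Implicit. Unset Printing Implicit Defensive.
Import Order.TTheory GRing.Theory Num.Theory.
Local Open Scope classical_set_scope.
Local Open Scope ring_scope.

Section defs.
Context d (Omega : measurableType d) (R : realType).
Variable P : probability Omega R.

Definition complete_sub_sigma_algebra (G : set (set Omega)) :=
  [/\ sigma_algebra setT G, G `<=` measurable & P.-negligible `<=` G].

Definition filtration (T : R) (F : R -> set (set Omega)) :=
  (forall s, 0 <= s <= T -> complete_sub_sigma_algebra (F s)) /\
  (forall s u, 0 <= s -> s <= u -> u <= T -> F s `<=` F u).

Definition Gmeas (G : set (set Omega)) (f : Omega -> R) :=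
  forall B : set R, measurable B -> G (f @^-1` B).
Definition Gmeas_e (G : set (set Omega)) (f : Omega -> \bar R) :=
  forall B : set (\bar R), measurable B -> G (f @^-1` B).

Definition is_cond_esssup (G : set (set Omega)) (Y W : Omega -> \bar R) :=
  [/\ Gmeas_e G W, {ae P, forall w, (Y w <= W w)%E} &
      forall V, Gmeas_e G V -> {ae P, forall w, (Y w <= V w)%E} ->
        {ae P, forall w, (W w <= V w)%E}].

Definition cond_esssup (G : set (set Omega)) (Y : Omega -> \bar R) : Omega -> \bar R :=
  epsilon (inhabits (fun _ => +oo%E)) (is_cond_esssup G Y).

Definition cond_essinf (G : set (set Omega)) (Y : Omega -> \bar R) : Omega -> \bar R :=
  fun w => (- cond_esssup G (fun w => - Y w)%E w)%E.

Definition mul_ind (X : Omega -> R) (A : set Omega) : Omega -> \bar R :=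
  fun w => (X w * \1_A w)%:E.

Definition Linf_neg (G : set (set Omega)) (X : Omega -> R) :=
  [/\ Gmeas G X, (exists M : R, {ae P, forall w, `|X w| <= M}) &
      {ae P, forall w, X w <= 0}].

Definition L0_neg_bdd_below (G : set (set Omega)) (X : Omega -> R) :=
  [/\ Gmeas G X, (exists m : R, {ae P, forall w, m <= X w}) &
      {ae P, forall w, X w <= 0}].

Definition Linf (G : set (set Omega)) (X : Omega -> R) :=
  Gmeas G X /\ (exists M : R, {ae P, forall w, `|X w| <= M}).

Definition same_essinf (F0 Ft : set (set Omega)) (Z X : Omega -> R) :=
  forall A, Ft A ->
    {ae P, forall w, cond_essinf F0 (mul_ind Z A) w = cond_essinf F0 (mul_ind X A) w}.

End defs.

From HB Require Import structures.
From mathcomp Require Import all_boot all_order all_algebra.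
From mathcomp Require Import all_classical all_reals all_analysis measurable_realfun.
From Stdlib Require Import ClassicalEpsilon.

(* The conditional essential supremum of a bounded nonnegative Y exists: the
   G-measurable majorants of Y with values in [0, M] are closed under countable
   infima, so one of them has minimal integral, and comparing it with its minimum
   with any other G-measurable majorant shows that it is the smallest one.
   Parts (a) and (b) then reduce to a single statement about Z := - ess sup_{F_t}(-X).
   For A in F_t, ess sup_{F_0} of (-Z) 1_A and of (-X) 1_A coincide (a tower
   property: an F_0-majorant of (-X) 1_A, patched off A with ess sup_{F_t}(-X),
   becomes an F_t-majorant of -X).  For uniqueness, if Z1 and Z2 both work and
   A := {Z2 < q <= Z1} with q <= 0 rational, then on A the common ess sup_{F_0} is
   at most -q but dominates -Z2 > -q, so A is null. *)

Set Implicit Arguments. Unset Strict Implicit. Unset Printing Implicit Defensive.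
Import Order.TTheory GRing.Theory Num.Theory.
Local Open Scope classical_set_scope.
Local Open Scope ring_scope.

Section sub_sigma_algebra_measurability.
Context d (Omega : measurableType d) (R : realType).
Variables (G : set (set Omega)) (sG : sigma_algebra setT G).

Lemma sub_sigma_measurableP d' (U : measurableType d') (f : Omega -> U) :
  (forall B, measurable B -> G (f @^-1` B)) <->
  measurable_fun [set: g_sigma_algebraType G] (f : g_sigma_algebraType G -> U).
Proof.
rewrite -[in X in X <-> _](measurable_g_measurableTypeE sG).
by split=> [h _ B mB|h B mB]; [rewrite setTI; exact: h|rewrite -[_ @^-1` _]setTI; exact: h].
Qed.

Lemma GmeasP (f : Omega -> R) :
  Gmeas G f <-> measurable_fun [set: g_sigma_algebraType G] (f : g_sigma_algebraType G -> R).
Proof. exact: sub_sigma_measurableP. Qed.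

Lemma Gmeas_eP (f : Omega -> \bar R) :
  Gmeas_e G f <->
  measurable_fun [set: g_sigma_algebraType G] (f : g_sigma_algebraType G -> \bar R).
Proof. exact: sub_sigma_measurableP. Qed.

Lemma Gmeas_e_cst (c : \bar R) : Gmeas_e G (cst c).
Proof. exact/Gmeas_eP/measurable_cst. Qed.

Lemma Gmeas_e_patch (A : set Omega) (f g : Omega -> \bar R) :
  G A -> Gmeas_e G f -> Gmeas_e G g -> Gmeas_e G (patch g A f).
Proof.
move=> GA mf mg B mB.
have -> : patch g A f @^-1` B = (A `&` f @^-1` B) `|` (~` A `&` g @^-1` B).
  apply/seteqP; split=> w /=; rewrite /patch; have [wA|wA] := pselect (A w).
  - by rewrite (mem_set wA) => Bw; left.
  - by rewrite (memNset wA) => Bw; right.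
  - by rewrite (mem_set wA) => -[[]|[]].
  - by rewrite (memNset wA) => -[[]|[]].
rewrite -(measurable_g_measurableTypeE sG) in GA mf mg *.
by apply: measurableU; apply: measurableI => //; [exact: mf|exact: measurableC|exact: mg].
Qed.

Lemma Gmeas_e_measurable (f : Omega -> \bar R) :
  G `<=` measurable -> Gmeas_e G f -> measurable_fun [set: Omega] f.
Proof. by move=> GF mf _ B mB; rewrite setTI; exact/GF/mf. Qed.

End sub_sigma_algebra_measurability.

Lemma Gmeas_e_sub d (Omega : measurableType d) (R : realType)
    (G H : set (set Omega)) (f : Omega -> \bar R) :
  G `<=` H -> Gmeas_e G f -> Gmeas_e H f.
Proof. by move=> GH mf B mB; exact/GH/mf. Qed.

Section ae_comparisons.
Context d (T : measurableType d) (R : realType) (mu : measure T R).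
Local Open Scope ereal_scope.

Lemma ae_eq_of_le_integral (U W : T -> \bar R) :
  measurable_fun setT U -> measurable_fun setT W ->
  (forall x, 0 <= U x <= W x) -> (forall x, U x \is a fin_num) ->
  \int[mu]_x U x \is a fin_num -> \int[mu]_x W x <= \int[mu]_x U x ->
  {ae mu, forall x, U x = W x}.
Proof.
move=> mU mW UW Ufin intUfin intWU.
have U0 x : 0 <= U x by case/andP: (UW x).
have mD : measurable_fun setT (fun x => W x - U x) by exact: emeasurable_funB.
have D0 x : 0 <= W x - U x by rewrite sube_ge0 ?Ufin ?orbT //; case/andP: (UW x).
have intW : \int[mu]_x W x = \int[mu]_x U x + \int[mu]_x (W x - U x).
  by rewrite -ge0_integralD //; apply: eq_integral => x _; rewrite addeC subeK.
have intD0 : \int[mu]_x (W x - U x) = 0.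
  apply/eqP; rewrite eq_le integral_ge0 // andbT.
  by rewrite -(leeD2lE _ _ intUfin) adde0 -intW.
have : (fun x => W x - U x) = \0 %[ae mu].
  apply/(ae_eq_integral_abs mu measurableT mD).
  by rewrite -intD0; apply: eq_integral => x _; rewrite gee0_abs.
apply: filterS => x /(_ I) /= WU0.
by rewrite -(subeK (W x) (Ufin x)) WU0 add0e.
Qed.

Local Close Scope ereal_scope.

Lemma ae_le_of_cuts (f g : T -> R) :
  (forall q, {ae mu, forall x, ~ (g x < q <= f x)}) -> {ae mu, forall x, f x <= g x}.
Proof.
move=> cuts.
pose q_ n : R := ratr (odflt 0 (unpickle n)).
have : {ae mu, forall x n, ~ (g x < q_ n <= f x)} by apply: ae_foralln => n; exact: cuts.
apply: filterS => x hx; rewrite leNgt; apply/negP => /rat_in_itvoo[r].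
rewrite in_itv /= => /andP[gr rf].
by apply: (hx (pickle r)); rewrite /q_ pickleK /= gr (ltW rf).
Qed.

End ae_comparisons.

Section conditional_esssup.
Context d (Omega : measurableType d) (R : realType) (P : probability Omega R).
Local Open Scope ereal_scope.

Lemma is_cond_esssup_ae_uniq G Y W1 W2 :
  is_cond_esssup P G Y W1 -> is_cond_esssup P G Y W2 -> {ae P, forall w, W1 w = W2 w}.
Proof.
move=> [m1 Y1 min1] [m2 Y2 min2].
by apply: filterS2 (min2 _ m1 Y1) (min1 _ m2 Y2) => w le21 le12; apply/eqP; rewrite eq_le le12.
Qed.

Lemma is_cond_esssup_ae_eq G Y1 Y2 W : {ae P, forall w, Y1 w = Y2 w} ->
  is_cond_esssup P G Y1 W -> is_cond_esssup P G Y2 W.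
Proof.
move=> Y12 [mW Y1W minW]; split => // [|V mV Y2V].
  by apply: filterS2 Y12 Y1W => w ->.
by apply: minW => //; apply: filterS2 Y12 Y2V => w ->.
Qed.

Section existence.
Variables (G : set (set Omega)) (sG : sigma_algebra setT G) (GF : G `<=` measurable).
Variables (Y : Omega -> \bar R) (M : R).
Hypotheses (M0 : (0 <= M)%R) (YM : {ae P, forall w, 0 <= Y w <= M%:E}).

Let majorant V :=
  [/\ Gmeas_e G V, forall w, 0 <= V w <= M%:E & {ae P, forall w, Y w <= V w}].

Let majorant_integral_le V : majorant V -> \int[P]_x V x <= M%:E.
Proof.
move=> [mV VM _]; rewrite -[M%:E]mule1 -(probability_setT P) -integral_cst //.
apply: ge0_le_integral => //.
- by move=> x _; case/andP: (VM x).
- exact: Gmeas_e_measurable GF mV.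
- by move=> x _; case/andP: (VM x).
Qed.

Let majorant_einfs Vs : (forall n, majorant (Vs n)) ->
  majorant (fun w => einfs (fun n => Vs n w) 0%N).
Proof.
move=> maj; split.
- apply/Gmeas_eP => //.
  apply: (measurable_fun_einfs (f := Vs : (g_sigma_algebraType G -> _)^nat)).
  by move=> n; apply/Gmeas_eP => //; case: (maj n).
- move=> w; apply/andP; split.
    by apply: le_ereal_inf_tmp => _ [n _ <-]; case: (maj n) => _ /(_ w) /andP[].
  apply: (@le_trans _ _ (Vs 0%N w)); first by apply: ereal_inf_lbound; exists 0%N.
  by case: (maj 0%N) => _ /(_ w) /andP[].
- have : {ae P, forall w n, Y w <= Vs n w} by apply: ae_foralln => n; case: (maj n).
  by apply: filterS => w YVs; apply: le_ereal_inf_tmp => _ [n _ <-].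
Qed.

Let exists_integral_minimal_majorant :
  exists2 W, majorant W & forall V, majorant V -> \int[P]_x W x <= \int[P]_x V x.
Proof.
pose a := ereal_inf [set \int[P]_x V x | V in majorant].
have majM : majorant (cst M%:E).
  split; [exact: Gmeas_e_cst|by move=> w; rewrite lexx lee_fin M0|].
  by apply: filterS YM => w /andP[].
have afin : a \is a fin_num.
  rewrite ge0_fin_numE; last first.
    apply: le_ereal_inf_tmp => _ [V [mV V0 _] <-]; apply: integral_ge0 => x _.
    by case/andP: (V0 x).
  apply: le_lt_trans (ltey M%:E); apply: le_trans (majorant_integral_le majM).
  by apply: ereal_inf_lbound; exists (cst M%:E).
have /choice[Vs minimizing] : forall n : nat,
    exists V, majorant V /\ \int[P]_x V x < a + (n.+1%:R^-1)%:E.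
  move=> n.
  have n1_gt0 : (0 < n.+1%:R^-1 :> R)%R by rewrite invr_gt0.
  have [_ [V majV <-] ?] := lb_ereal_inf_adherent n1_gt0 afin.
  by exists V.
pose W w := einfs (fun n => Vs n w) 0%N.
have majW : majorant W by apply: majorant_einfs => n; case: (minimizing n).
have [mW W0M _] := majW.
exists W => // V majV.
have aV : a <= \int[P]_x V x by apply: ereal_inf_lbound; exists V.
apply: (@le_trans _ _ a) aV.
apply/lee_addgt0Pr => e e0.
have [N _ /(_ N (leqnn N)) Ne] := near_infty_natSinv_lt (PosNum e0).
have [[mVN VN0M _] intN] := minimizing N.
apply: (@le_trans _ _ (\int[P]_x Vs N x)); last first.
  by apply: le_trans (ltW intN) _; rewrite leeD2l // lee_fin ltW.
apply: ge0_le_integral => //.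
- by move=> x _; case/andP: (W0M x).
- exact: Gmeas_e_measurable GF mW.
- exact: Gmeas_e_measurable GF mVN.
- by move=> x _; apply: ereal_inf_lbound; exists N.
Qed.

Let integral_minimal_majorant_is_cond_esssup W : majorant W ->
  (forall V, majorant V -> \int[P]_x W x <= \int[P]_x V x) -> is_cond_esssup P G Y W.
Proof.
move=> majW Wmin; have [mW W0M YW] := majW; split => // V mV YV.
pose U w := mine (W w) (maxe (V w) 0).
have mU : Gmeas_e G U.
  apply/Gmeas_eP => //; apply: measurable_mine; first exact/Gmeas_eP.
  by apply: measurable_maxe; [exact/Gmeas_eP|exact: measurable_cst].
have U0W w : 0 <= U w <= W w.
  by have /andP[W0 _] := W0M w; rewrite /U le_min ge_min lexx le_max lexx W0 !orbT.
have UM w : U w <= M%:E by case/andP: (U0W w) => _ /le_trans; apply; case/andP: (W0M w).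
have majU : majorant U.
  split => // [w|]; first by rewrite UM andbT; case/andP: (U0W w).
  apply: filterS3 YW YV YM => w YW YV /andP[Y0 _].
  by rewrite /U le_min YW le_max YV.
have Ufin w : U w \is a fin_num.
  by rewrite ge0_fin_numE ?(le_lt_trans (UM w) (ltey _)) //; case/andP: (U0W w).
have intUfin : \int[P]_x U x \is a fin_num.
  rewrite ge0_fin_numE ?(le_lt_trans (majorant_integral_le majU) (ltey _)) //.
  by apply: integral_ge0 => x _; case/andP: (U0W x).
have := ae_eq_of_le_integral (Gmeas_e_measurable GF mU) (Gmeas_e_measurable GF mW)
  U0W Ufin intUfin (Wmin U majU).
apply: filterS3 YV YM => w YV /andP[Y0 _] <-.
by rewrite /U ge_min ge_max lexx (le_trans Y0 YV) orbT.
Qed.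

Lemma cond_esssupP : is_cond_esssup P G Y (cond_esssup P G Y).
Proof.
apply: epsilon_spec; have [W majW Wmin] := exists_integral_minimal_majorant.
by exists W; exact: integral_minimal_majorant_is_cond_esssup.
Qed.

Lemma cond_esssup_bounded : {ae P, forall w, 0 <= cond_esssup P G Y w <= M%:E}.
Proof.
have [_ YW Wmin] := cond_esssupP.
have WM : {ae P, forall w, cond_esssup P G Y w <= M%:E}.
  by apply: Wmin; [exact: Gmeas_e_cst|apply: filterS YM => w /andP[]].
by apply: filterS3 YM YW WM => w /andP[Y0 _] YW WM; rewrite WM (le_trans Y0 YW).
Qed.

End existence.

Lemma is_cond_esssup_patch (F0 Ft : set (set Omega)) (A : set Omega)
    (Y W V : Omega -> \bar R) :
  sigma_algebra setT Ft -> F0 `<=` Ft -> Ft A ->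
  is_cond_esssup P Ft Y W -> is_cond_esssup P F0 (Y \_ A) V ->
  is_cond_esssup P F0 (W \_ A) V.
Proof.
move=> sFt F0t FtA [mW YW Wmin] [mV YAV Vmin]; split => // [|V' mV' WAV'].
- have : {ae P, forall w, W w <= patch W A V w}.
    apply: Wmin; first exact: (Gmeas_e_patch sFt FtA (Gmeas_e_sub F0t mV) mW).
    by apply: filterS2 YW YAV => w; rewrite /patch; case: (w \in A).
  by apply: filterS2 YAV => w; rewrite /patch; case: (w \in A).
- apply: Vmin => //; apply: filterS2 YW WAV' => w YW.
  by rewrite /patch; case: (w \in A) => // /(le_trans YW).
Qed.

Lemma ae_bounded_patch (Y : Omega -> \bar R) (A : set Omega) (M : R) : (0 <= M)%R ->
  {ae P, forall w, 0 <= Y w <= M%:E} -> {ae P, forall w, 0 <= (Y \_ A) w <= M%:E}.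
Proof.
by move=> M0; apply: filterS => w; rewrite /patch; case: (w \in A); rewrite // lexx lee_fin.
Qed.

End conditional_esssup.

Section essinf_representative.
Context d (Omega : measurableType d) (R : realType) (P : probability Omega R).
Variables (F0 Ft : set (set Omega)).
Hypotheses (sF0 : sigma_algebra setT F0) (F0F : F0 `<=` measurable).
Hypotheses (sFt : sigma_algebra setT Ft) (FtF : Ft `<=` measurable) (F0t : F0 `<=` Ft).

(* [f \_ A] is [f] on [A] and the default point of [\bar R], namely 0, elsewhere. *)
Lemma oppe_mul_ind (X : Omega -> R) (A : set Omega) :
  (fun w => - mul_ind X A w)%E = (fun w => (- X w)%:E) \_ A.
Proof.
apply/funext => w; rewrite /mul_ind /patch indicE.
by case: (w \in A); rewrite ?mulr1 ?mulr0 ?oppe0.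
Qed.

Lemma same_essinf_esssupP (Z X : Omega -> R) :
  same_essinf P F0 Ft Z X <->
  forall A, Ft A -> {ae P, forall w, cond_esssup P F0 ((fun w => (- Z w)%:E) \_ A) w =
                                    cond_esssup P F0 ((fun w => (- X w)%:E) \_ A) w}.
Proof.
rewrite /same_essinf /cond_essinf; split => sZX A /sZX; apply: filterS => w;
  rewrite !oppe_mul_ind; [exact: oppe_inj|by move=> ->].
Qed.

Lemma Linf_neg_L0_neg_bdd_below (G : set (set Omega)) (Z : Omega -> R) :
  Linf_neg P G Z -> L0_neg_bdd_below P G Z.
Proof.
move=> [mZ [M ZM] Z0]; split => //; exists (- M).
by apply: filterS ZM => w /ler_normlP[]; rewrite lerNl.
Qed.

Lemma L0_neg_bdd_below_oppe_bounded (G : set (set Omega)) (Z : Omega -> R) :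
  L0_neg_bdd_below P G Z ->
  exists2 M, 0 <= M & {ae P, forall w, (0 <= (- Z w)%:E <= M%:E)%E}.
Proof.
move=> [_ [m mZ] Z0]; exists (Num.max (- m) 0); first by rewrite le_max lexx orbT.
apply: filterS2 mZ Z0 => w mZ Z0.
by rewrite !lee_fin oppr_ge0 Z0 le_max lerN2 mZ.
Qed.

Lemma exists_same_essinf (X : Omega -> R) (M : R) :
  {ae P, forall w, `|X w| <= M} -> {ae P, forall w, X w <= 0} ->
  exists2 Z, Linf_neg P Ft Z & same_essinf P F0 Ft Z X.
Proof.
move=> XM X0; pose M' := Num.max M 0.
have M'0 : 0 <= M' by rewrite le_max lexx orbT.
pose Y w := (- X w)%:E.
have YM : {ae P, forall w, (0 <= Y w <= M'%:E)%E}.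
  apply: filterS2 XM X0 => w XM X0; rewrite !lee_fin oppr_ge0 X0 le_max.
  by move/ler_normlP: XM => [-> _].
pose W := cond_esssup P Ft Y; pose Z w := - fine (W w).
have W_esssup : is_cond_esssup P Ft Y W := cond_esssupP sFt FtF M'0 YM.
have WZ : {ae P, forall w, W w = (- Z w)%:E}.
  apply: filterS (cond_esssup_bounded sFt FtF M'0 YM) => w /andP[W0 WM].
  by rewrite opprK fineK // ge0_fin_numE // (le_lt_trans WM (ltey _)).
have ZM : {ae P, forall w, (0 <= (- Z w)%:E <= M'%:E)%E}.
  by apply: filterS2 WZ (cond_esssup_bounded sFt FtF M'0 YM) => w <-.
exists Z.
  split.
  - apply/GmeasP => //; apply: measurableT_comp => //; apply: measurableT_comp => //.
    by case: W_esssup => /(Gmeas_eP sFt).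
  - exists M'; apply: filterS ZM => w; rewrite !lee_fin oppr_ge0 => /andP[Z0 ZM'].
    by rewrite ler0_norm.
  - by apply: filterS ZM => w; rewrite lee_fin oppr_ge0 => /andP[].
apply/same_essinf_esssupP => A FtA.
have YA_esssup := cond_esssupP sF0 F0F M'0 (ae_bounded_patch A M'0 YM).
have WZA : {ae P, forall w, (W \_ A) w = ((fun w => (- Z w)%:E) \_ A) w}.
  by apply: filterS WZ => w WZ; rewrite /patch WZ.
have := is_cond_esssup_patch sFt F0t FtA W_esssup YA_esssup.
move/(is_cond_esssup_ae_eq WZA) => ZA_esssup.
exact: is_cond_esssup_ae_uniq (cond_esssupP sF0 F0F M'0 (ae_bounded_patch A M'0 ZM)) ZA_esssup.
Qed.

Lemma same_essinf_ae_le (X Z1 Z2 : Omega -> R) :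
  L0_neg_bdd_below P Ft Z1 -> L0_neg_bdd_below P Ft Z2 ->
  same_essinf P F0 Ft Z1 X -> same_essinf P F0 Ft Z2 X -> {ae P, forall w, Z1 w <= Z2 w}.
Proof.
move=> LZ1 LZ2 /same_essinf_esssupP sZ1 /same_essinf_esssupP sZ2.
have [[mZ1 _ Z10] [mZ2 _ _]] := (LZ1, LZ2).
have [M1 M10 Z1M] := L0_neg_bdd_below_oppe_bounded LZ1.
have [M2 M20 Z2M] := L0_neg_bdd_below_oppe_bounded LZ2.
apply: ae_le_of_cuts => q; have [q_gt0|q_le0] := ltrP 0 q.
  by apply: filterS Z10 => w Z10 /andP[_ /le_trans/(_ Z10)]; rewrite leNgt q_gt0.
pose A := [set w | Z2 w < q <= Z1 w].
have FtA : Ft A.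
  have -> : A = Z2 @^-1` `]-oo, q[ `&` Z1 @^-1` `[q, +oo[.
    by apply/seteqP; split => w /=; rewrite !in_itv /= andbT => /andP.
  rewrite -(measurable_g_measurableTypeE sFt) in mZ1 mZ2 *.
  by apply: measurableI; [apply: mZ2|apply: mZ1]; exact: measurable_itv.
have [_ Z1A_le _] := cond_esssupP sF0 F0F M10 (ae_bounded_patch A M10 Z1M).
have [_ Z2A_le _] := cond_esssupP sF0 F0F M20 (ae_bounded_patch A M20 Z2M).
have V1q : {ae P, forall w,
    (cond_esssup P F0 ((fun w => (- Z1 w)%:E) \_ A) w <= (- q)%:E)%E}.
  have [_ _ V1min] := cond_esssupP sF0 F0F M10 (ae_bounded_patch A M10 Z1M).
  apply: V1min; first exact: Gmeas_e_cst.
  apply/nearW => w; rewrite /patch; case: (boolP (w \in A)) => [/set_mem/andP[_ qZ1]|_].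
    by rewrite lee_fin lerN2.
  by rewrite lee_fin oppr_ge0.
have V12 : {ae P, forall w, cond_esssup P F0 ((fun w => (- Z1 w)%:E) \_ A) w =
                            cond_esssup P F0 ((fun w => (- Z2 w)%:E) \_ A) w}.
  by apply: filterS2 (sZ1 A FtA) (sZ2 A FtA) => w -> ->.
apply: filterS3 V12 Z2A_le V1q => w V12 Z2V2 V1q wA.
move: Z2V2; rewrite /patch (mem_set (wA : A w)) -V12 => /le_trans/(_ V1q).
by rewrite lee_fin lerN2 leNgt; case/andP: wA => ->.
Qed.

Lemma same_essinf_ae_uniq (X Z1 Z2 : Omega -> R) :
  L0_neg_bdd_below P Ft Z1 -> L0_neg_bdd_below P Ft Z2 ->
  same_essinf P F0 Ft Z1 X -> same_essinf P F0 Ft Z2 X -> {ae P, forall w, Z1 w = Z2 w}.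
Proof.
move=> LZ1 LZ2 sZ1 sZ2.
apply: filterS2 (same_essinf_ae_le LZ1 LZ2 sZ1 sZ2) (same_essinf_ae_le LZ2 LZ1 sZ2 sZ1).
by move=> w Z12 Z21; apply/eqP; rewrite eq_le Z12 Z21.
Qed.

End essinf_representative.

Theorem mainTheorem19 (d : measure_display) (Omega : measurableType d)
  (R : realType) (P : probability Omega R) (T : R) (F : R -> set (set Omega))
  (t : R) :
  measure_is_complete P ->
  filtration P T F ->
  0 <= t <= T ->
  (* (a) *)
  (forall X : Omega -> R, Linf_neg P (F T) X ->
     exists Z : Omega -> R,
       [/\ Linf_neg P (F t) Z, same_essinf P (F 0) (F t) Z X &
           forall Z' : Omega -> R, Linf_neg P (F t) Z' ->
             same_essinf P (F 0) (F t) Z' X -> {ae P, forall w, Z' w = Z w}])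
  /\
  (* (b) *)
  (forall X : Omega -> R, Linf P (F T) X -> {ae P, forall w, X w < 0} ->
     exists Z : Omega -> R,
       [/\ L0_neg_bdd_below P (F t) Z, same_essinf P (F 0) (F t) Z X &
           forall Z' : Omega -> R, L0_neg_bdd_below P (F t) Z' ->
             same_essinf P (F 0) (F t) Z' X -> {ae P, forall w, Z' w = Z w}]).
Proof.
move=> _ [Fsub Fmono] /andP[t0 tT].
have [sF0 F0F _] : complete_sub_sigma_algebra P (F 0).
  by apply: Fsub; rewrite lexx (le_trans t0 tT).
have [sFt FtF _] : complete_sub_sigma_algebra P (F t) by apply: Fsub; rewrite t0 tT.
have F0t : F 0 `<=` F t := Fmono 0 t (lexx 0) t0 tT.
split.
- move=> X [_ [M XM] X0]; have [Z LZ sZ] := exists_same_essinf sF0 F0F sFt FtF F0t XM X0.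
  exists Z; split => // Z' LZ' sZ'.
  exact: (same_essinf_ae_uniq sF0 F0F sFt (Linf_neg_L0_neg_bdd_below LZ')
                                            (Linf_neg_L0_neg_bdd_below LZ) sZ' sZ).
- move=> X [_ [M XM]] Xneg.
  have X0 : {ae P, forall w, X w <= 0} by apply: filterS Xneg => w /ltW.
  have [Z LZ sZ] := exists_same_essinf sF0 F0F sFt FtF F0t XM X0.
  exists Z; split => //; first exact: Linf_neg_L0_neg_bdd_below.
  move=> Z' LZ' sZ'.
  exact: (same_essinf_ae_uniq sF0 F0F sFt LZ' (Linf_neg_L0_neg_bdd_below LZ) sZ' sZ).
Qed.
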